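(* Let $A$ be a partial ring and $\mathfrak{a}$ an ideal of $A$. Put $\sqrt{\mathfrak a}=\{a\in A:\exists r\in\mathbb{N},\ a^r\in\mathfrak a\}$. Then $\sqrt{\mathfrak a}=\bigcap_{\mathfrak p\in X_A,\ \mathfrak a\subseteq\mathfrak p}\mathfrak p$.
   Context: A partial ring is a set $A$ with $0$, a set $A_2\subseteq A\times A$ of summable pairs and a partial addition ($0$ a unit summable with everything; commutative; associative in the sense: $(a,b),(a+b,c)\in A_2$ iff $(b,c),(a,b+c)\in A_2$, and then $(a+b)+c=a+(b+c)$), with a commutative associative multiplication with unit $1$ such that $0\cdot a=0$ and $(a_1,a_2)\in A_2\Rightarrow(a_1x,a_2x)\in A_2$, $(a_1+a_2)x=a_1x+a_2x$. An ideal is a subset $I\ni 0$ with $a+b\in I$ whenever $a,b\in I$ and $(a,b)\in A_2$, and $AI\subseteq I$. A prime ideal is an ideal $\mathfrak p\neq A$ such that $xy\in\mathfrak p$ implies $x\in\mathfrak p$ or $y\in\mathfrak p$. $X_A$ is the set of prime ideals of $A$. (An empty intersection is $A$.) *)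

(* The partial addition is modelled by a total function
   [padd] together with the set [summable] (= A_2) of pairs on which it is
   defined; values of [padd] outside [summable] are never used. *)
Record PartialRing := {
  carrier :> Type;
  pzero : carrier;
  pone : carrier;
  summable : carrier -> carrier -> Prop;
  padd : carrier -> carrier -> carrier;
  pmul : carrier -> carrier -> carrier;
  summable_0l : forall a, summable pzero a;
  padd_0l : forall a, padd pzero a = a;
  summable_comm : forall a b, summable a b -> summable b a;
  padd_comm : forall a b, summable a b -> padd a b = padd b a;
  summable_assoc : forall a b c,
    (summable a b /\ summable (padd a b) c) <->
    (summable b c /\ summable a (padd b c));
  padd_assoc : forall a b c,
    summable a b -> summable (padd a b) c ->
    padd (padd a b) c = padd a (padd b c);
  pmul_comm : forall a b, pmul a b = pmul b a;
  pmul_assoc : forall a b c, pmul (pmul a b) c = pmul a (pmul b c);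
  pmul_1l : forall a, pmul pone a = a;
  pmul_0l : forall a, pmul pzero a = pzero;
  summable_mulr : forall a1 a2 x, summable a1 a2 -> summable (pmul a1 x) (pmul a2 x);
  pmul_addl : forall a1 a2 x, summable a1 a2 ->
    pmul (padd a1 a2) x = padd (pmul a1 x) (pmul a2 x)
}.

Section Defs.
Variable A : PartialRing.

Definition is_ideal (I : A -> Prop) : Prop :=
  I (pzero A) /\
  (forall a b, I a -> I b -> summable A a b -> I (padd A a b)) /\
  (forall x a, I a -> I (pmul A x a)).

Definition is_prime (p : A -> Prop) : Prop :=
  is_ideal p /\
  (exists x, ~ p x) /\
  (forall x y, p (pmul A x y) -> p x \/ p y).

Fixpoint ppow (a : A) (n : nat) : A :=
  match n with
  | O => pone A
  | S n => pmul A a (ppow a n)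
  end.

Definition radical (I : A -> Prop) : A -> Prop :=
  fun a => exists r : nat, I (ppow a r).

(* intersection of all primes containing I (empty intersection = A) *)
Definition primes_above_inter (I : A -> Prop) : A -> Prop :=
  fun a => forall p, is_prime p -> (forall x, I x -> p x) -> p a.
End Defs.

From mathcomp Require Import ssreflect ssrfun ssrbool eqtype.
From mathcomp Require Import boolp classical_sets.

(* If a is not in the radical of I, Zorn's lemma gives an ideal J containing I
   and maximal among the ideals containing no power of a.  Such a J is prime:
   if x y lies in J but x does not, the ideal (J : x) is strictly larger than
   J only if it meets the powers of a, and a^n x in J forces x into J because
   (J : a^n) contains no power of a either.  Conversely a prime containing a^r
   contains a. *)

Set Implicit Arguments.
Local Open Scope classical_set_scope.

Lemma Zorn_bigcup_above (T : Type) (P : set (set T)) (X0 : set T) :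
  P X0 ->
  (forall F : set (set T), F `<=` P -> F !=set0 -> total_on F subset ->
    P (\bigcup_(X in F) X)) ->
  exists J, [/\ X0 `<=` J, P J & forall B, J `<` B -> ~ P B].
Proof.
move=> PX0 P_chain.
(* Zorn for [X |-> P (X0 `|` X)]: the empty chain is then handled by [P X0]. *)
have [J [PX0J maxJ]] : exists J, P (X0 `|` J) /\ forall B, J `<` B -> ~ P (X0 `|` B).
  apply: Zorn_bigcup => F FP Ftot.
  have [->|F0] := eqVneq F set0; first by rewrite bigcup_set0 setU0.
  rewrite -bigcupUr; last exact/set0P.
  rewrite -(bigcup_image F (setU X0) id); apply: P_chain.
  - by move=> _ [X FX <-]; apply: FP.
  - by move/set0P: F0 => [X FX]; exists (X0 `|` X), X.
  - move=> _ _ [X FX <-] [Y FY <-].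
    by case: (Ftot X Y FX FY) => [XY|YX]; [left|right]; apply: setUS.
exists (X0 `|` J); split=> //.
move=> B [JB BJ] PB; apply: (maxJ B); last first.
  by rewrite setUidr // => x X0x; apply: JB; left.
by split=> [x Jx|]; [apply: JB; right|move=> BsJ; apply: BJ => x /BsJ; right].
Qed.

Section PartialRingIdeals.
Variable A : PartialRing.

Lemma ppow_add (a : A) n m : ppow A a (n + m) = pmul A (ppow A a n) (ppow A a m).
Proof.
elim: n => [|n IHn] /=; first by rewrite pmul_1l.
by rewrite IHn pmul_assoc.
Qed.

Lemma ideal_mulr (J : A -> Prop) x z : is_ideal A J -> J x -> J (pmul A x z).
Proof. by move=> [_ [_ JM]] Jx; rewrite pmul_comm; apply: JM. Qed.

Lemma colon_ideal (J : A -> Prop) z : is_ideal A J ->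
  is_ideal A (fun w => J (pmul A w z)).
Proof.
move=> [J0 [JD JM]]; split; first by rewrite pmul_0l.
split=> [x y Jx Jy sxy|x y Jy]; last by rewrite pmul_assoc; apply: JM.
by rewrite pmul_addl //; apply: JD => //; apply: summable_mulr.
Qed.

Lemma bigcup_chain_ideal (F : set (A -> Prop)) :
  (forall J, F J -> is_ideal A J) -> F !=set0 -> total_on F subset ->
  is_ideal A (\bigcup_(J in F) J).
Proof.
move=> Fid [J0 FJ0] Ftot; split; first by exists J0 => //; case: (Fid _ FJ0).
split=> [x y [J FJ Jx] [K FK Ky] sxy|x y [J FJ Jy]]; last first.
  by exists J => //; case: (Fid _ FJ) => _ [_ JM]; apply: JM.
have add_in L : F L -> L x -> L y -> (\bigcup_(J in F) J) (padd A x y).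
  by move=> FL Lx Ly; exists L => //; case: (Fid _ FL) => _ [LD _]; apply: LD.
case: (Ftot J K FJ FK) => [JK|KJ].
- by apply: (add_in K) => //; apply: JK.
- by apply: (add_in J) => //; apply: KJ.
Qed.

Lemma prime_ppow (p : A -> Prop) a r : is_prime A p -> p (ppow A a r) -> p a.
Proof.
move=> [pid [[x px] p_mul]]; elim: r => [|r IHr] /=.
  by move=> p1; case: px; rewrite -(pmul_1l A x); apply: ideal_mulr.
by case/p_mul=> // /IHr.
Qed.

Definition ppow_free (a : A) (J : A -> Prop) := forall n, ~ J (ppow A a n).

Lemma exists_maximal_ppow_free (I : A -> Prop) a :
  is_ideal A I -> ppow_free a I ->
  exists J, [/\ I `<=` J, is_ideal A J, ppow_free a J &
    forall K, is_ideal A K -> ppow_free a K -> J `<=` K -> K `<=` J].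
Proof.
move=> Iid Ifree; pose P J := is_ideal A J /\ ppow_free a J.
have P_chain F : F `<=` P -> F !=set0 -> total_on F subset ->
    P (\bigcup_(J in F) J).
  move=> FP F0 Ftot; split; first by apply: bigcup_chain_ideal => // J /FP[].
  by move=> n [J /FP[_ Jfree]]; apply: Jfree.
have [J [IJ [Jid Jfree] maxJ]] := @Zorn_bigcup_above _ P I (conj Iid Ifree) P_chain.
exists J; split=> // K Kid Kfree JK x Kx; apply: contrapT => Jx.
by apply: (maxJ K) => //; split=> // KJ; apply: Jx; apply: KJ.
Qed.

Section MaximalPpowFree.
Variables (a : A) (J : A -> Prop).
Hypotheses (Jid : is_ideal A J) (Jfree : ppow_free a J).
Hypothesis Jmax :
  forall K, is_ideal A K -> ppow_free a K -> J `<=` K -> K `<=` J.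

Lemma maximal_ppow_free_colon z :
  ppow_free a (fun w => J (pmul A w z)) -> forall w, J (pmul A w z) -> J w.
Proof.
by move=> zfree; apply: Jmax => // [|w Jw]; [apply: colon_ideal|apply: ideal_mulr].
Qed.

Lemma maximal_ppow_free_prime : is_prime A J.
Proof.
split=> //; split; first by exists (pone A); apply: (Jfree 0).
move=> x y Jxy; case: (pselect (J x)) => [|Jx]; [by left|right].
apply: (@maximal_ppow_free_colon x); last by rewrite pmul_comm.
move=> n Jnx; apply: Jx; apply: (@maximal_ppow_free_colon (ppow A a n)).
- by move=> m; rewrite -ppow_add; apply: Jfree.
- by rewrite pmul_comm.
Qed.

End MaximalPpowFree.

End PartialRingIdeals.

Theorem mainTheorem19 (A : PartialRing) (I : A -> Prop) (HI : is_ideal A I) :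
  forall a : A, radical A I a <-> primes_above_inter A I a.
Proof.
move=> a; split=> [[r Iar] p pprime Ip|a_in_primes].
  exact: prime_ppow pprime (Ip _ Iar).
apply: contrapT => a_notin_rad.
have Ifree : ppow_free A a I by move=> n Ian; apply: a_notin_rad; exists n.
have [J [IJ Jid Jfree Jmax]] := exists_maximal_ppow_free HI Ifree.
apply: (Jfree 1%nat); apply: ideal_mulr => //.
exact: a_in_primes (maximal_ppow_free_prime Jid Jfree Jmax) IJ.
Qed.
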